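(* For $d>0$ let $\beta_d:\mathbb{R}\setminus 2\pi\mathbb{Z}\to\mathbb{R}$ be the function \[ \beta_{d}(s) = -\frac{s}{d} + \frac{\pi}{d}\coth\Big(\frac{\pi s}{2d}\Big) + \frac{\pi}{d} \sum_{n=1}^{\infty} \frac{2\sinh(\frac{\pi s}{d})}{\cosh(\frac{\pi s}{d})-\cosh(\frac{2\pi^2 n}{d})}. \] Equivalently, writing $x=\pi^2/(2d)$, \[ \pi\beta_d(\pi/2) = 2x\coth(x/2) - x - 4x\sinh(x)\sum_{n=1}^\infty \frac{1}{\cosh(4nx)-\cosh(x)}. \] Then \[ \beta_d(\pi/2)\ \ge\ 1 \qquad\text{for all } d\in(0,\infty). \]
   Context: The function $\beta_d$ is the kernel of the periodic Hilbert transform $\mathcal{C}_d$ on the strip $\{(x,y)\in\mathbb{R}^2: -d<y<0\}$: for a smooth $2\pi$-periodic mean-zero $F:\mathbb{R}\to\mathbb{R}$, $(\mathcal{C}_d F)(x)=\frac{1}{2\pi}\,\mathrm{PV}\int_{-\pi}^{\pi}\beta_d(x-s)F(s)\,ds$, where $\mathcal{C}_d$ maps $\sum_{n\ge1}(a_n\cos nx+b_n\sin nx)$ to $\sum_{n\ge1}(a_n\coth(nd)\sin nx - b_n\coth(nd)\cos nx)$. This interpretation is background only; the claim concerns the explicit formula for $\beta_d$. *)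

From Stdlib Require Import Reals.
From Coquelicot Require Import Coquelicot.
Open Scope R_scope.

Definition coth (y : R) : R := cosh y / sinh y.

Definition beta_term (d s : R) (n : nat) : R :=
  2 * sinh (PI * s / d) / (cosh (PI * s / d) - cosh (2 * PI ^ 2 * INR n / d)).

Definition beta (d s : R) : R :=
  - s / d + PI / d * coth (PI * s / (2 * d))
  + PI / d * Series (fun k : nat => beta_term d s (S k)).

From Stdlib Require Import Reals Lra Lia.
From Coquelicot Require Import Coquelicot.
Open Scope R_scope.

(* Put x = pi^2 / (2 d).  Expanding each term of beta_d(pi/2) as a geometric series in
   e^(-x) and regrouping gives beta_d(pi/2) >= (x / pi) P(0), where P(t) = sum_(n in Z) sech (t + n x)
   is the x-periodic summation of sech (equality in fact holds).  Since the integral of P over a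
   period is the integral of sech over R, namely pi, it suffices that P is maximal at 0, so that
   the Riemann sum x P(0) dominates pi.  This holds because sech is a positive-definite function:
   sech (a - b) = 2 int_0^oo e^a e^(-e^(2a) r) e^b e^(-e^(2b) r) dr, so its Gram sums at the points
   i x and t + i x with weights 1 and -1 are nonnegative, and their Cesaro limit is
   2 (P(0) - P(t)). *)

Lemma le_of_is_derive_nonneg (f df : R -> R) a b :
  a <= b -> (forall x, is_derive f x (df x)) -> (forall x, 0 <= df x) -> f a <= f b.
Proof.
  intros Hab Hf Hdf.
  destruct (MVT_gen f a b df) as [c [_ Hc]].
  - intros x _; apply Hf.
  - intros x _; apply continuity_pt_filterlim, (ex_derive_continuous f).
    exists (df x); apply Hf.
  - unfold Rmin, Rmax in Hc; destruct (Rle_dec a b); [|lra].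
    specialize (Hdf c); nra.
Qed.

Lemma exp_neg_le_inv y : 0 < y -> exp (- y) <= / y.
Proof.
  intros Hy; rewrite exp_Ropp; apply Rinv_le_contravar; [lra|].
  pose proof (exp_ineq1_le y); lra.
Qed.

Lemma exp_opp_INR_mul n h : exp (- (INR n * h)) = exp (- h) ^ n.
Proof.
  induction n as [|n IH].
  - simpl; rewrite Rmult_0_l, Ropp_0; apply exp_0.
  - rewrite S_INR, <- tech_pow_Rmult, <- IH, <- exp_plus; f_equal; ring.
Qed.

Lemma is_lim_seq_inv_S : is_lim_seq (fun n => / INR (S n)) 0.
Proof.
  apply (is_lim_seq_incr_1 (fun n => / INR n)).
  replace (Finite 0) with (Rbar_inv p_infty) by reflexivity.
  apply is_lim_seq_inv; [apply is_lim_seq_INR | discriminate].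
Qed.

Lemma is_lim_seq_nonneg_of_ge_neg_div (u : nat -> R) (l M : R) :
  is_lim_seq u l -> (forall n, - M / INR (S n) <= u n) -> 0 <= l.
Proof.
  intros Hu Hle.
  assert (Hdiv : is_lim_seq (fun n => - M / INR (S n)) 0).
  { replace (Finite 0) with (Rbar_mult (- M) 0) by (simpl; f_equal; ring).
    apply is_lim_seq_scal_l, is_lim_seq_inv_S. }
  exact (is_lim_seq_le _ _ _ _ Hle Hdiv Hu).
Qed.

Lemma sum_f_R0_shift (a : nat -> R) N :
  sum_f_R0 a (S N) = a O + sum_f_R0 (fun k => a (S k)) N.
Proof. apply decomp_sum; lia. Qed.

Lemma sum_f_R0_app (a : nat -> R) N M :
  sum_f_R0 a (S N + M) = sum_f_R0 a N + sum_f_R0 (fun k => a (S N + k)%nat) M.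
Proof.
  induction M as [|M IH].
  - simpl; rewrite !Nat.add_0_r; reflexivity.
  - rewrite Nat.add_succ_r, tech5, IH, tech5, Nat.add_succ_r; ring.
Qed.

Lemma sum_f_R0_double_app (T : nat -> nat -> R) N :
  sum_f_R0 (fun i => sum_f_R0 (fun k => T i k) (S N + N)) (S N + N)
  = sum_f_R0 (fun i => sum_f_R0 (fun k =>
      T i k + T i (S N + k)%nat + T (S N + i)%nat k + T (S N + i)%nat (S N + k)%nat) N) N.
Proof.
  rewrite sum_f_R0_app, <- plus_sum; apply sum_eq; intros i _.
  rewrite !sum_f_R0_app, <- !plus_sum; apply sum_eq; intros; ring.
Qed.

Lemma sum_f_R0_telescope (a : nat -> R) N :
  sum_f_R0 (fun k => a (S k) - a k) N = a (S N) - a O.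
Proof. induction N as [|N IH]; simpl; [|rewrite IH]; ring. Qed.

Lemma sum_f_R0_square (a : nat -> R) N :
  sum_f_R0 (fun i => sum_f_R0 (fun k => a i * a k) N) N = sum_f_R0 a N ^ 2.
Proof.
  rewrite (sum_eq _ (fun i => a i * sum_f_R0 a N))
    by (intros; rewrite (scal_sum a N (a i)); apply sum_eq; intros; ring).
  rewrite <- scal_sum; ring.
Qed.

Lemma is_derive_sum_f_R0 (f df : nat -> R -> R) N x :
  (forall k, is_derive (f k) x (df k x)) ->
  is_derive (fun t => sum_f_R0 (fun k => f k t) N) x (sum_f_R0 (fun k => df k x) N).
Proof.
  intros Hf; induction N as [|N IH]; simpl; [apply Hf|].
  apply (is_derive_plus (fun t => sum_f_R0 (fun k => f k t) N) (f (S N))); auto.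
Qed.

Lemma is_lim_seq_sum_f_R0 (a : nat -> R) l :
  is_series a l -> is_lim_seq (fun n => sum_f_R0 a n) l.
Proof. intros H; apply is_lim_seq_Reals, is_series_Reals, H. Qed.

Lemma sum_f_R0_toeplitz (F : R -> R) N : (forall u, F (- u) = F u) ->
  sum_f_R0 (fun i => sum_f_R0 (fun k => F (INR i - INR k)) N) N
  = (INR N + 1) * F 0 + 2 * sum_f_R0 (fun d => (INR N - INR d) * F (INR (S d))) N.
Proof.
  intros Feven. induction N as [|N IH].
  - simpl; rewrite Rminus_0_r; ring.
  - rewrite sum_f_R0_shift, sum_f_R0_shift.
    rewrite (sum_eq (fun i => sum_f_R0 (fun k => F (INR (S i) - INR k)) (S N))
               (fun i => F (INR (S i)) + sum_f_R0 (fun k => F (INR i - INR k)) N)).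
    2: { intros i _; rewrite sum_f_R0_shift, Rminus_0_r; f_equal.
         apply sum_eq; intros k _; rewrite !S_INR; f_equal; ring. }
    rewrite (sum_eq (fun k => F (INR 0 - INR (S k))) (fun k => F (INR (S k))))
      by (intros k _; rewrite <- Feven; f_equal; simpl; ring).
    rewrite plus_sum, IH, tech5, Rminus_diag.
    rewrite (sum_eq (fun d => (INR (S N) - INR d) * F (INR (S d)))
               (fun d => (INR N - INR d) * F (INR (S d)) + F (INR (S d))))
      by (intros; rewrite S_INR; ring).
    rewrite plus_sum, (S_INR N); ring.
Qed.

Lemma sum_f_R0_INR_pow_le q N : 0 <= q < 1 ->
  sum_f_R0 (fun d => INR (S d) * q ^ S d) N <= q / (1 - q) ^ 2.
Proof.
  intros Hq.
  assert (Hclosed : (1 - q) ^ 2 * sum_f_R0 (fun d => INR (S d) * q ^ S d) N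
                    = q - INR (S (S N)) * q ^ S (S N) + INR (S N) * q ^ S (S (S N)))
    by (induction N as [|N IH]; [simpl; ring|rewrite tech5, Rmult_plus_distr_l, IH, !S_INR; simpl; ring]).
  apply Rmult_le_reg_l with ((1 - q) ^ 2); [nra|].
  rewrite Hclosed; replace ((1 - q) ^ 2 * (q / (1 - q) ^ 2)) with q by (field; lra).
  assert (0 <= q ^ S (S N)) by (apply pow_le; lra).
  pose proof (pos_INR (S N)).
  rewrite <- tech_pow_Rmult with (n := S (S N)), (S_INR (S N)).
  assert (INR (S N) * (q * q ^ S (S N)) <= INR (S N) * q ^ S (S N))
    by (apply Rmult_le_compat_l; nra).
  lra.
Qed.

Lemma sum_f_R0_le_Series (a : nat -> R) N :
  (forall k, 0 <= a k) -> ex_series a -> sum_f_R0 a N <= Series a.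
Proof.
  intros Ha Hex; apply sum_incr; [|exact Ha].
  apply is_series_Reals, Series_correct, Hex.
Qed.

Lemma is_series_sum_f_R0 (f : nat -> nat -> R) (l : nat -> R) K :
  (forall n, is_series (f n) (l n)) ->
  is_series (fun m => sum_f_R0 (fun n => f n m) K) (sum_f_R0 l K).
Proof.
  intros Hf; induction K as [|K IH]; [apply Hf|].
  exact (is_series_plus _ _ _ _ IH (Hf (S K))).
Qed.

Lemma Series_ge_of_sum_f_R0_ge (a : nat -> R) c :
  (forall n, a n <= 0) -> (forall N, c <= sum_f_R0 a N) -> c <= Series a.
Proof.
  intros Ha Hc.
  destruct (ex_finite_lim_seq_decr (fun N => sum_f_R0 a N) c) as [l Hl];
    [intros N; rewrite tech5; specialize (Ha (S N)); lra | exact Hc|].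
  assert (Hseries : is_series a l)
    by (apply is_series_Reals, is_lim_seq_Reals, Hl).
  rewrite (is_series_unique _ _ Hseries).
  pose proof (is_lim_seq_le _ _ _ _ Hc (is_lim_seq_const c) Hl) as H; exact H.
Qed.

Section RatioKernel.
Variables (u c : nat -> R) (N : nat).
Hypothesis u_pos : forall i, 0 < u i.

Let s i k := u i ^ 2 + u k ^ 2.

Let s_pos i k : 0 < s i k.
Proof. pose proof (u_pos i); pose proof (u_pos k); unfold s; nra. Qed.

Let phi i r := c i * (u i * exp (- (u i ^ 2 * r))).

(* [u v / (u^2 + v^2) = int_0^oo (u e^(-u^2 r)) (v e^(-v^2 r)) dr]; [truncated r] is the
   quadratic form of the integral over [0, r], whose derivative is a square. *)
Let truncated r := sum_f_R0 (fun i => sum_f_R0 (fun k =>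
  c i * c k * (u i * u k * (1 - exp (- (s i k * r))) / s i k)) N) N.

Let truncated_nonneg r : 0 <= r -> 0 <= truncated r.
Proof.
  intros Hr.
  replace 0 with (truncated 0)
    by (apply sum_eq_R0; intros i _; apply sum_eq_R0; intros k _;
        rewrite Rmult_0_r, Ropp_0, exp_0; field; apply Rgt_not_eq, s_pos).
  apply (le_of_is_derive_nonneg truncated (fun r => sum_f_R0 (fun i => phi i r) N ^ 2));
    [exact Hr| |intros; apply pow2_ge_0].
  intros r'; rewrite <- sum_f_R0_square.
  apply (is_derive_sum_f_R0 (fun i r => sum_f_R0 (fun k =>
           c i * c k * (u i * u k * (1 - exp (- (s i k * r))) / s i k)) N)
           (fun i r => sum_f_R0 (fun k => phi i r * phi k r) N)); intros i.
  apply (is_derive_sum_f_R0 (fun k r => c i * c k * (u i * u k * (1 - exp (- (s i k * r))) / s i k))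
           (fun k r => phi i r * phi k r)); intros k.
  pose proof (s_pos i k) as Hs.
  unfold s in Hs |- *; auto_derive; [lra|].
  change (u i * (u i * 1)) with (u i ^ 2); change (u k * (u k * 1)) with (u k ^ 2).
  replace (exp (- ((u i ^ 2 + u k ^ 2) * r')))
    with (exp (- (u i ^ 2 * r')) * exp (- (u k ^ 2 * r')))
    by (rewrite <- exp_plus; f_equal; ring).
  unfold phi; field; lra.
Qed.

Let tail_ge r i k : 0 < r ->
  - (Rabs (c i * c k) * (u i * u k / s i k ^ 2)) / r
  <= c i * c k * (u i * u k / s i k)
     - c i * c k * (u i * u k * (1 - exp (- (s i k * r))) / s i k).
Proof.
  intros Hr.
  pose proof (s_pos i k) as Hs; pose proof (u_pos i); pose proof (u_pos k).
  assert (He : exp (- (s i k * r)) <= / (s i k * r)) by (apply exp_neg_le_inv; nra).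
  pose proof (exp_pos (- (s i k * r))).
  assert (Hcc : - Rabs (c i * c k) <= c i * c k)
    by (pose proof (Rle_abs (- (c i * c k))); rewrite Rabs_Ropp in *; lra).
  replace (c i * c k * (u i * u k / s i k) - c i * c k * (u i * u k * (1 - exp (- (s i k * r))) / s i k))
    with (c i * c k * (u i * u k / s i k * exp (- (s i k * r)))) by (field; lra).
  replace (- (Rabs (c i * c k) * (u i * u k / s i k ^ 2)) / r)
    with (- Rabs (c i * c k) * (u i * u k / s i k * / (s i k * r))) by (field; lra).
  set (p := u i * u k / s i k).
  assert (Hp : 0 < p) by (apply Rdiv_lt_0_compat; nra).
  pose proof (Rabs_pos (c i * c k)).
  apply Rle_trans with (- Rabs (c i * c k) * (p * exp (- (s i k * r)))).
  - apply Rmult_le_compat_neg_l; [lra|]. apply Rmult_le_compat_l; lra.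
  - apply Rmult_le_compat_r; [apply Rmult_le_pos; lra | exact Hcc].
Qed.

Lemma ratio_kernel_pos_def :
  0 <= sum_f_R0 (fun i => sum_f_R0 (fun k => c i * c k * (u i * u k / (u i ^ 2 + u k ^ 2))) N) N.
Proof.
  set (X := sum_f_R0 _ N).
  set (M := sum_f_R0 (fun i => sum_f_R0 (fun k => Rabs (c i * c k) * (u i * u k / s i k ^ 2)) N) N).
  apply (is_lim_seq_nonneg_of_ge_neg_div (fun _ => X) X M); [apply is_lim_seq_const|].
  intros n; pose proof (lt_0_INR (S n) (Nat.lt_0_succ n)) as Hr.
  pose proof (truncated_nonneg (INR (S n)) (Rlt_le _ _ Hr)).
  enough (- M / INR (S n) <= X - truncated (INR (S n))) by lra.
  unfold X, truncated; rewrite <- minus_sum.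
  replace (- M / INR (S n)) with ((- / INR (S n)) * M) by (field; lra).
  unfold M; rewrite scal_sum; apply sum_Rle; intros i _.
  rewrite <- minus_sum, Rmult_comm, scal_sum; apply sum_Rle; intros k _.
  pose proof (s_pos i k); eapply Rle_trans; [|apply tail_ge, Hr]; right; field; lra.
Qed.
End RatioKernel.

Definition sech (u : R) : R := / cosh u.

Lemma cosh_pos u : 0 < cosh u.
Proof. unfold cosh; pose proof (exp_pos u); pose proof (exp_pos (- u)); lra. Qed.

Lemma sech_pos u : 0 < sech u.
Proof. apply Rinv_0_lt_compat, cosh_pos. Qed.

Lemma sech_opp u : sech (- u) = sech u.
Proof. unfold sech, cosh; rewrite Ropp_involutive, Rplus_comm; reflexivity. Qed.

Lemma sech_0 : sech 0 = 1.
Proof. unfold sech; rewrite cosh_0; apply Rinv_1. Qed.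

Lemma sech_le_exp u : sech u <= 2 * exp (- u).
Proof.
  unfold sech, cosh; pose proof (exp_pos u); pose proof (exp_pos (- u)).
  replace (/ ((exp u + exp (- u)) / 2)) with (2 * / (exp u + exp (- u))) by (field; lra).
  rewrite exp_Ropp in *; apply Rmult_le_compat_l; [lra|].
  apply Rinv_le_contravar; lra.
Qed.

Lemma sech_sub a b : sech (a - b) = 2 * (exp a * exp b / (exp a ^ 2 + exp b ^ 2)).
Proof.
  unfold sech, cosh; unfold Rminus; rewrite Ropp_plus_distr, Ropp_involutive, !exp_plus, !exp_Ropp.
  pose proof (exp_pos a); pose proof (exp_pos b); field; split; nra.
Qed.

Lemma sech_pos_def (a c : nat -> R) N :
  0 <= sum_f_R0 (fun i => sum_f_R0 (fun k => c i * c k * sech (a i - a k)) N) N.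
Proof.
  rewrite (sum_eq _ (fun i => sum_f_R0 (fun k =>
             c i * c k * (exp (a i) * exp (a k) / (exp (a i) ^ 2 + exp (a k) ^ 2))) N * 2)).
  - rewrite <- scal_sum; apply Rmult_le_pos; [lra|].
    apply (ratio_kernel_pos_def (fun i => exp (a i))); intros; apply exp_pos.
  - intros i _; rewrite Rmult_comm, scal_sum; apply sum_eq; intros k _; rewrite sech_sub; ring.
Qed.

Definition gd (u : R) : R := 2 * atan (exp u) - PI / 2.

Lemma is_derive_gd u : is_derive gd u (sech u).
Proof.
  unfold gd, sech, cosh; pose proof (exp_pos u).
  auto_derive; [exact I|].
  rewrite exp_Ropp; field; split; [lra|nra].
Qed.

Lemma gd_eq_atan_exp_opp u : gd u = PI / 2 - 2 * atan (exp (- u)).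
Proof.
  unfold gd; rewrite exp_Ropp, atan_inv by apply exp_pos; ring.
Qed.

Lemma is_lim_seq_atan_exp_opp h : 0 < h -> is_lim_seq (fun n => atan (exp (- (INR n * h)))) 0.
Proof.
  intros Hh; rewrite <- atan_0.
  apply is_lim_seq_continuous; [apply derivable_continuous_pt, derivable_pt_atan|].
  apply (is_lim_seq_ext (fun n => exp (- h) ^ n)); [intros; symmetry; apply exp_opp_INR_mul|].
  apply is_lim_seq_geom; rewrite Rabs_pos_eq by (apply Rlt_le, exp_pos).
  rewrite <- exp_0; apply exp_increasing; lra.
Qed.

Lemma is_derive_gd_shift c s : is_derive (fun s => gd (s + c)) s (sech (s + c)).
Proof.
  replace (sech (s + c)) with (scal 1 (sech (s + c))) by (apply Rmult_1_l).
  apply (is_derive_comp gd (fun s => s + c)); [apply is_derive_gd|].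
  auto_derive; [exact I|ring].
Qed.

Definition sech_pair (h t : R) (k : nat) : R := sech (t + INR k * h) + sech (t - INR k * h).

Definition sech_periodic (h t : R) : R := sech t + Series (fun k => sech_pair h t (S k)).

Section Periodization.
Variable h : R.
Hypothesis h_pos : 0 < h.

Let q := exp (- h).

Let q_bounds : 0 < q < 1.
Proof. split; [apply exp_pos|]; rewrite <- exp_0; apply exp_increasing; lra. Qed.

Lemma sech_pair_pos t k : 0 < sech_pair h t k.
Proof. unfold sech_pair; pose proof (sech_pos (t + INR k * h)); pose proof (sech_pos (t - INR k * h)); lra. Qed.

Let sech_pair_le t k : sech_pair h t k <= 4 * cosh t * q ^ k.
Proof.
  unfold sech_pair, q, cosh; rewrite <- exp_opp_INR_mul, <- (sech_opp (t - _)).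
  pose proof (sech_le_exp (t + INR k * h)); pose proof (sech_le_exp (- (t - INR k * h))).
  replace (- (t + INR k * h)) with (- t + - (INR k * h)) in * by ring.
  replace (- - (t - INR k * h)) with (t + - (INR k * h)) in * by ring.
  rewrite exp_plus in *; lra.
Qed.

Lemma ex_series_sech_pair t : ex_series (fun k => sech_pair h t (S k)).
Proof.
  apply (ex_series_le (V := R_CompleteNormedModule) _ (fun k => 4 * cosh t * q ^ k)).
  - intros k; change norm with Rabs; rewrite Rabs_pos_eq by apply Rlt_le, sech_pair_pos.
    eapply Rle_trans; [apply sech_pair_le|].
    pose proof (cosh_pos t); apply Rmult_le_compat_l; [lra|].
    rewrite <- tech_pow_Rmult; pose proof (pow_le q k (Rlt_le _ _ (proj1 q_bounds))); nra.
  - apply (ex_series_scal_l (V := R_NormedModule)); eexists; apply is_series_geom.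
    rewrite Rabs_pos_eq; lra.
Qed.

Let second_diff t u := 2 * sech (u * h) - sech (u * h - t) - sech (u * h + t).

Let second_diff_opp t u : second_diff t (- u) = second_diff t u.
Proof.
  unfold second_diff; rewrite <- (sech_opp (- u * h)), <- (sech_opp (- u * h - t)), <- (sech_opp (- u * h + t)).
  replace (- (- u * h)) with (u * h) by ring.
  replace (- (- u * h - t)) with (u * h + t) by ring.
  replace (- (- u * h + t)) with (u * h - t) by ring; ring.
Qed.

Let second_diff_INR t k : second_diff t (INR k) = sech_pair h 0 k - sech_pair h t k.
Proof.
  unfold second_diff, sech_pair; rewrite Rplus_0_l, Rminus_0_l, sech_opp, <- (sech_opp (t - _)).
  replace (- (t - INR k * h)) with (INR k * h - t) by ring.
  rewrite (Rplus_comm t); ring.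
Qed.

(* Gram sum of [sech] at the points [i h] and [t + i h] (0 <= i <= N) with weights [1] and [-1]. *)
Let toeplitz_second_diff_nonneg t N :
  0 <= sum_f_R0 (fun i => sum_f_R0 (fun k => second_diff t (INR i - INR k)) N) N.
Proof.
  set (a j := if Nat.leb j N then INR j * h else t + INR (j - S N) * h).
  set (c j := if Nat.leb j N then 1 else -1).
  pose proof (sech_pos_def a c (S N + N)) as Hgram.
  rewrite sum_f_R0_double_app in Hgram.
  eapply Rle_trans; [exact Hgram|]; right.
  apply sum_eq; intros i Hi; apply sum_eq; intros k Hk.
  assert (Hleb : forall j, (j <= N)%nat -> Nat.leb j N = true) by (intros; apply Nat.leb_le; lia).
  assert (Hgtb : forall j, Nat.leb (S N + j) N = false) by (intros; apply Nat.leb_gt; lia).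
  assert (Hsub : forall j, (S N + j - S N)%nat = j) by (intros; lia).
  unfold a, c, second_diff; rewrite !Hleb, !Hgtb, !Hsub by assumption.
  replace (t + INR i * h - (t + INR k * h)) with ((INR i - INR k) * h) by ring.
  replace (INR i * h - INR k * h) with ((INR i - INR k) * h) by ring.
  replace (INR i * h - (t + INR k * h)) with ((INR i - INR k) * h - t) by ring.
  replace (t + INR i * h - INR k * h) with ((INR i - INR k) * h + t) by ring.
  ring.
Qed.

Let second_diff_cesaro t N :
  - (2 * (4 * cosh t) * (q / (1 - q) ^ 2)) / INR (S N)
  <= second_diff t 0 + 2 * sum_f_R0 (fun d => second_diff t (INR (S d))) N.
Proof.
  pose proof (toeplitz_second_diff_nonneg t N) as Hnonneg.
  rewrite sum_f_R0_toeplitz in Hnonneg by apply second_diff_opp.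
  assert (Hweighted : - (4 * cosh t) * (q / (1 - q) ^ 2)
                      <= sum_f_R0 (fun d => INR (S d) * second_diff t (INR (S d))) N).
  { apply Rle_trans with (- (4 * cosh t) * sum_f_R0 (fun d => INR (S d) * q ^ S d) N).
    - pose proof (cosh_pos t); apply Rmult_le_compat_neg_l; [lra|].
      apply sum_f_R0_INR_pow_le; pose proof q_bounds; lra.
    - rewrite scal_sum; apply sum_Rle; intros d _.
      pose proof (pos_INR (S d)); pose proof (sech_pair_pos 0 (S d)); pose proof (sech_pair_le t (S d)).
      rewrite second_diff_INR.
      replace (INR (S d) * q ^ S d * - (4 * cosh t)) with (INR (S d) * (- (4 * cosh t) * q ^ S d)) by ring.
      apply Rmult_le_compat_l; lra. }
  rewrite (sum_eq _ (fun d => second_diff t (INR (S d)) * INR (S N) - INR (S d) * second_diff t (INR (S d)))) in Hnonneg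
    by (intros; rewrite !S_INR; ring).
  rewrite minus_sum, <- scal_sum in Hnonneg.
  pose proof (lt_0_INR (S N) (Nat.lt_0_succ N)) as HN.
  apply Rmult_le_reg_l with (INR (S N)); [exact HN|].
  replace (INR (S N) * (- (2 * (4 * cosh t) * (q / (1 - q) ^ 2)) / INR (S N)))
    with (- (2 * (4 * cosh t) * (q / (1 - q) ^ 2))) by (field; lra).
  rewrite S_INR in *; lra.
Qed.

Lemma sech_periodic_le t : sech_periodic h t <= sech_periodic h 0.
Proof.
  assert (Hlim : is_lim_seq (fun N => second_diff t 0 + 2 * sum_f_R0 (fun d => second_diff t (INR (S d))) N)
                   (second_diff t 0 + 2 * (Series (fun k => sech_pair h 0 (S k))
                                 - Series (fun k => sech_pair h t (S k))))).
  { apply is_lim_seq_plus'; [apply is_lim_seq_const|].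
    apply (is_lim_seq_scal_l _ 2 (Finite _)), is_lim_seq_sum_f_R0.
    apply (is_series_ext (fun k => sech_pair h 0 (S k) - sech_pair h t (S k)));
      [intros; symmetry; apply second_diff_INR|].
    exact (is_series_minus _ _ _ _ (Series_correct _ (ex_series_sech_pair 0))
                                   (Series_correct _ (ex_series_sech_pair t))). }
  pose proof (is_lim_seq_nonneg_of_ge_neg_div _ _ _ Hlim (second_diff_cesaro t)).
  unfold sech_periodic, second_diff in *.
  rewrite Rmult_0_l, Rminus_0_l, Rplus_0_l, sech_opp, sech_0 in *; lra.
Qed.
End Periodization.

Section RiemannSum.
Variable h : R.
Hypothesis h_pos : 0 < h.

(* [Psi] is a primitive of a partial sum of [sech_periodic h], which is at most
   [sech_periodic h 0]; so [s * sech_periodic h 0 - Psi s] increases, and its increment over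
   one period telescopes. *)
Lemma gd_telescope_le N :
  gd (INR (S (S N)) * h) - gd (- (INR (S N) * h)) <= h * sech_periodic h 0.
Proof.
  set (Psi s := gd s + sum_f_R0 (fun k => gd (s + INR (S k) * h) + gd (s - INR (S k) * h)) N).
  assert (HPsi : forall s, is_derive Psi s (sech s + sum_f_R0 (fun k => sech_pair h s (S k)) N)).
  { intros s; apply (is_derive_plus gd); [apply is_derive_gd|].
    apply (is_derive_sum_f_R0 (fun k s => gd (s + INR (S k) * h) + gd (s - INR (S k) * h))
                              (fun k s => sech_pair h s (S k))); intros k.
    apply (is_derive_plus (fun s => gd (s + INR (S k) * h))); [apply is_derive_gd_shift|].
    exact (is_derive_gd_shift (- (INR (S k) * h)) s). }
  assert (Hmono : 0 * sech_periodic h 0 - Psi 0 <= h * sech_periodic h 0 - Psi h).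
  { apply (le_of_is_derive_nonneg (fun s => s * sech_periodic h 0 - Psi s)
             (fun s => sech_periodic h 0 - (sech s + sum_f_R0 (fun k => sech_pair h s (S k)) N)));
      [lra| |].
    - intros s; apply (is_derive_minus (fun s => s * sech_periodic h 0) Psi); [|apply HPsi].
      auto_derive; [exact I|ring].
    - intros s; pose proof (sech_periodic_le h h_pos s).
      pose proof (sum_f_R0_le_Series (fun k => sech_pair h s (S k)) N
                    (fun k => Rlt_le _ _ (sech_pair_pos h s (S k))) (ex_series_sech_pair h h_pos s)).
      unfold sech_periodic in *; lra. }
  set (a k := gd (INR (S k) * h)); set (b k := gd (- (INR k * h))).
  assert (Hdiff : Psi h - Psi 0 = gd h - gd 0 + (a (S N) - a O) - (b (S N) - b O)).
  { unfold Psi; rewrite <- !sum_f_R0_telescope.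
    enough (sum_f_R0 (fun k => gd (h + INR (S k) * h) + gd (h - INR (S k) * h)) N
            - sum_f_R0 (fun k => gd (0 + INR (S k) * h) + gd (0 - INR (S k) * h)) N
            = sum_f_R0 (fun k => a (S k) - a k) N - sum_f_R0 (fun k => b (S k) - b k) N) by lra.
    rewrite <- !minus_sum; apply sum_eq; intros k _; unfold a, b.
    replace (h + INR (S k) * h) with (INR (S (S k)) * h) by (rewrite (S_INR (S k)); ring).
    replace (h - INR (S k) * h) with (- (INR k * h)) by (rewrite S_INR; ring).
    rewrite Rplus_0_l, Rminus_0_l; ring. }
  unfold a, b in Hdiff; change (INR 1) with 1 in Hdiff; change (INR 0) with 0 in Hdiff.
  rewrite Rmult_1_l, Rmult_0_l, Ropp_0 in Hdiff.
  lra.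
Qed.

Lemma pi_le_riemann_sum : PI <= h * sech_periodic h 0.
Proof.
  set (alpha n := atan (exp (- (INR n * h)))).
  assert (Halpha : is_lim_seq alpha 0) by apply (is_lim_seq_atan_exp_opp h h_pos).
  assert (Hlim : is_lim_seq (fun N => PI / 2 - 2 * alpha (S (S N)) - (2 * alpha (S N) - PI / 2))
                   (PI / 2 - 2 * 0 - (2 * 0 - PI / 2))).
  { apply is_lim_seq_minus'; [apply is_lim_seq_minus'|apply is_lim_seq_minus'];
      try apply is_lim_seq_const; apply (is_lim_seq_scal_l _ 2 (Finite 0)).
    - apply (is_lim_seq_incr_1 (fun n => alpha (S n))), (is_lim_seq_incr_1 alpha), Halpha.
    - apply (is_lim_seq_incr_1 alpha), Halpha. }
  assert (Hle : forall N, PI / 2 - 2 * alpha (S (S N)) - (2 * alpha (S N) - PI / 2)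
                         <= h * sech_periodic h 0).
  { intros N; pose proof (gd_telescope_le N) as H.
    rewrite gd_eq_atan_exp_opp in H; unfold gd in H; unfold alpha; lra. }
  pose proof (is_lim_seq_le _ _ _ _ Hle Hlim (is_lim_seq_const _)) as Hpi; simpl in Hpi; lra.
Qed.
End RiemannSum.

Lemma coth_half u : 0 < u -> coth (u / 2) = 1 + 2 / (exp u - 1).
Proof.
  intros Hu; unfold coth, cosh, sinh.
  replace (exp u) with (exp (u / 2) * exp (u / 2)) by (rewrite <- exp_plus; f_equal; field).
  rewrite exp_Ropp.
  assert (1 < exp (u / 2)) by (rewrite <- exp_0; apply exp_increasing; lra).
  field; split; nra.
Qed.

Lemma sinh_div_cosh_sub a b : 0 < a < b ->
  2 * sinh a / (cosh a - cosh b) = 2 / (exp (b + a) - 1) - 2 / (exp (b - a) - 1).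
Proof.
  intros Hab.
  assert (HA : 1 < exp a) by (rewrite <- exp_0; apply exp_increasing; lra).
  assert (HB : exp a < exp b) by (apply exp_increasing; lra).
  replace (cosh a - cosh b) with ((exp a - exp b) * (exp a * exp b - 1) / (2 * exp a * exp b))
    by (unfold cosh; rewrite !exp_Ropp; field; lra).
  replace (exp (b - a)) with (exp b / exp a) by (unfold Rminus; rewrite exp_plus, exp_Ropp; reflexivity).
  unfold sinh; rewrite exp_plus, exp_Ropp.
  field; repeat split; nra.
Qed.

Lemma is_series_pow_exp_opp u :
  0 < u -> is_series (fun m => exp (- u) ^ S m) (1 / (exp u - 1)).
Proof.
  intros Hu.
  assert (Hq : 0 < exp (- u) < 1)
    by (split; [apply exp_pos|rewrite <- exp_0; apply exp_increasing; lra]).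
  replace (1 / (exp u - 1)) with (exp (- u) * / (1 - exp (- u)))
    by (assert (1 < exp u) by (rewrite <- exp_0; apply exp_increasing; lra);
        rewrite exp_Ropp; field; lra).
  apply (is_series_scal_l (V := R_NormedModule)), is_series_geom.
  rewrite Rabs_pos_eq; lra.
Qed.

Lemma sum_f_R0_pow_odd_diff z K :
  sum_f_R0 (fun n => z ^ (4 * n + 5) - z ^ (4 * n + 3)) K = - (z ^ 3 * (1 - z ^ (4 * S K)) / (1 + z ^ 2)).
Proof.
  assert (Hz : 1 + z * z <> 0) by nra.
  induction K as [|K IH]; [simpl; field; exact Hz|].
  rewrite tech5, IH; replace (4 * S (S K))%nat with (4 * S K + 4)%nat by lia.
  replace (4 * S K + 5)%nat with (4 * S K + 4 + 1)%nat by lia.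
  rewrite !pow_add; simpl; field; exact Hz.
Qed.

Lemma sech_INR_mul k x : sech (INR k * x) = 2 * exp (- x) ^ k / (1 + (exp (- x) ^ k) ^ 2).
Proof.
  rewrite <- exp_opp_INR_mul; unfold sech, cosh.
  pose proof (exp_pos (INR k * x)); rewrite exp_Ropp.
  field; split; nra.
Qed.

Section BetaAtHalfPi.
Variable d : R.
Hypothesis d_pos : 0 < d.

Let x := PI ^ 2 / (2 * d).
Let q := exp (- x).
Let bt n := beta_term d (PI / 2) (S n).

Let x_pos : 0 < x.
Proof. unfold x; pose proof PI_RGT_0; apply Rdiv_lt_0_compat; nra. Qed.

Let q_bounds : 0 < q < 1.
Proof. split; [apply exp_pos|]; rewrite <- exp_0; apply exp_increasing; lra. Qed.

Let bt_eq n : bt n = 2 / (exp (INR (4 * n + 5) * x) - 1) - 2 / (exp (INR (4 * n + 3) * x) - 1).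
Proof.
  unfold bt, beta_term.
  replace (PI * (PI / 2) / d) with x by (unfold x; field; lra).
  replace (2 * PI ^ 2 * INR (S n) / d) with (INR (4 * n + 4) * x)
    by (unfold x; rewrite plus_INR, mult_INR, (S_INR n); simpl INR; field; lra).
  pose proof (pos_INR n).
  rewrite sinh_div_cosh_sub by (rewrite plus_INR, mult_INR; simpl; nra).
  replace (INR (4 * n + 4) * x + x) with (INR (4 * n + 5) * x) by (rewrite !plus_INR, mult_INR; simpl INR; ring).
  replace (INR (4 * n + 4) * x - x) with (INR (4 * n + 3) * x) by (rewrite !plus_INR, mult_INR; simpl INR; ring).
  reflexivity.
Qed.

Let beta_term_is_series n :
  is_series (fun m => 2 * ((q ^ S m) ^ (4 * n + 5) - (q ^ S m) ^ (4 * n + 3))) (bt n).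
Proof.
  assert (Hgeom : forall k, (0 < k)%nat ->
            is_series (fun m => 2 * (q ^ S m) ^ k) (2 / (exp (INR k * x) - 1))).
  { intros k Hk.
    replace (2 / (exp (INR k * x) - 1)) with (2 * (1 / (exp (INR k * x) - 1))) by (unfold Rdiv; ring).
    apply (is_series_ext (fun m => 2 * exp (- (INR k * x)) ^ S m)).
    - intros m; unfold q; rewrite exp_opp_INR_mul, <- !pow_mult, Nat.mul_comm; reflexivity.
    - apply (is_series_scal_l (V := R_NormedModule)), is_series_pow_exp_opp.
      apply Rmult_lt_0_compat; [apply lt_0_INR|]; assumption. }
  rewrite bt_eq.
  apply (is_series_ext (fun m => 2 * (q ^ S m) ^ (4 * n + 5) - 2 * (q ^ S m) ^ (4 * n + 3)));
    [intros; rewrite Rmult_minus_distr_l; reflexivity|].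
  exact (is_series_minus _ _ _ _ (Hgeom (4 * n + 5)%nat ltac:(lia)) (Hgeom (4 * n + 3)%nat ltac:(lia))).
Qed.

Let beta_term_nonpos n : bt n <= 0.
Proof.
  rewrite bt_eq.
  assert (H3 : 1 < exp (INR (4 * n + 3) * x))
    by (rewrite <- exp_0; apply exp_increasing, Rmult_lt_0_compat; [apply lt_0_INR; lia|exact x_pos]).
  assert (H5 : exp (INR (4 * n + 3) * x) < exp (INR (4 * n + 5) * x))
    by (apply exp_increasing, Rmult_lt_compat_r; [exact x_pos|apply lt_INR; lia]).
  assert (2 / (exp (INR (4 * n + 5) * x) - 1) <= 2 / (exp (INR (4 * n + 3) * x) - 1)); [|lra].
  unfold Rdiv; apply Rmult_le_compat_l; [lra|]; apply Rinv_le_contravar; lra.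
Qed.

(* Exchanging the sums over [n] and [m] in [bt n = sum_m ...] gives back [sech]; termwise
   comparison for each truncation in [n] avoids justifying the exchange. *)
Let sech_series_le K :
  Series (fun m => sech (INR (S m) * x)) <= 2 / (exp x - 1) + sum_f_R0 bt K.
Proof.
  set (z m := q ^ S m).
  set (b m := 2 * z m + sum_f_R0 (fun n => 2 * (z m ^ (4 * n + 5) - z m ^ (4 * n + 3))) K).
  assert (Hb : is_series b (2 / (exp x - 1) + sum_f_R0 bt K)).
  { apply (is_series_plus (V := R_NormedModule)).
    - replace (2 / (exp x - 1)) with (2 * (1 / (exp x - 1))) by (unfold Rdiv; ring).
      apply (is_series_scal_l (V := R_NormedModule)), is_series_pow_exp_opp, x_pos.
    - apply (is_series_sum_f_R0 (fun n m => 2 * (z m ^ (4 * n + 5) - z m ^ (4 * n + 3)))).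
      apply beta_term_is_series. }
  rewrite <- (is_series_unique _ _ Hb).
  apply Series_le; [|eexists; exact Hb].
  intros m; rewrite sech_INR_mul; fold q; fold (z m).
  assert (Hz : 0 < z m < 1)
    by (unfold z; split; [apply pow_lt|apply pow_lt_1_compat; [|lia]]; lra).
  assert (Hzk : 0 <= z m ^ (4 * S K) < 1)
    by (split; [apply pow_le|apply pow_lt_1_compat; [|lia]]; lra).
  unfold b; rewrite (sum_eq _ (fun n => (z m ^ (4 * n + 5) - z m ^ (4 * n + 3)) * 2))
    by (intros; apply Rmult_comm).
  rewrite <- scal_sum, sum_f_R0_pow_odd_diff.
  assert (Hden : 0 < 1 + z m ^ 2) by nra.
  split; [apply Rlt_le, Rdiv_lt_0_compat; lra|].
  apply Rmult_le_reg_r with (1 + z m ^ 2); [exact Hden|].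
  field_simplify; [|lra|lra].
  assert (0 <= z m ^ 3 * z m ^ (4 * S K)) by (apply Rmult_le_pos; [apply pow_le|]; lra).
  simpl pow in *; nra.
Qed.

Lemma beta_half_pi_ge : x / PI * sech_periodic x 0 <= beta d (PI / 2).
Proof.
  set (S' := Series (fun m => sech (INR (S m) * x))).
  assert (Hbt : S' - 2 / (exp x - 1) <= Series bt).
  { apply Series_ge_of_sum_f_R0_ge; [apply beta_term_nonpos|].
    intros K; pose proof (sech_series_le K); unfold S'; lra. }
  assert (Hper : sech_periodic x 0 = 1 + 2 * S').
  { unfold sech_periodic, S'; rewrite sech_0, <- Series_scal_l; f_equal.
    apply Series_ext; intros k; unfold sech_pair.
    rewrite Rplus_0_l, Rminus_0_l, sech_opp; ring. }
  unfold beta; fold bt.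
  replace (PI * (PI / 2) / (2 * d)) with (x / 2) by (unfold x; field; lra).
  rewrite coth_half by exact x_pos.
  pose proof PI_RGT_0.
  replace (PI / d) with (2 * (x / PI)) by (unfold x; field; lra).
  replace (- (PI / 2) / d) with (- (x / PI)) by (unfold x; field; lra).
  rewrite Hper.
  assert (0 < x / PI) by (apply Rdiv_lt_0_compat; [exact x_pos|lra]).
  nra.
Qed.
End BetaAtHalfPi.

Theorem theorem1 : forall d : R, 0 < d -> 1 <= beta d (PI / 2).
Proof.
  intros d Hd.
  set (x := PI ^ 2 / (2 * d)).
  assert (Hx : 0 < x) by (unfold x; pose proof PI_RGT_0; apply Rdiv_lt_0_compat; nra).
  pose proof (pi_le_riemann_sum x Hx) as Hriemann.
  pose proof (beta_half_pi_ge d Hd) as Hbeta; fold x in Hbeta.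
  pose proof PI_RGT_0.
  enough (1 <= x / PI * sech_periodic x 0) by lra.
  apply Rmult_le_reg_l with PI; [lra|].
  replace (PI * (x / PI * sech_periodic x 0)) with (x * sech_periodic x 0) by (field; lra).
  lra.
Qed.
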